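(* For any set $\Phi\cup\{\psi\}$ of $\mathsf{BSML}$-formulas, if $\Phi\vdash\psi$ in the natural deduction system $\mathcal{S}$ described below, then $\Phi\models\psi$.
   Context: Syntax: $\mathsf{BSML}$-formulas $\phi ::= p \mid \neg\phi \mid (\phi\wedge\phi) \mid (\phi\vee\phi) \mid \Diamond\phi \mid \mathrm{NE}$. Classical formulas ($\alpha,\beta$): the $\mathrm{NE}$-free ones. $\Box\phi:=\neg\Diamond\neg\phi$; $\bot:=p\wedge\neg p$; $\bot\!\!\!\bot:=\bot\wedge\mathrm{NE}$. Semantics on Kripke models $M=(W,R,V)$, states $s\subseteq W$: $s\models p$ iff $s\subseteq V(p)$; $s\dashv p$ iff $s\cap V(p)=\emptyset$; $s\models\mathrm{NE}$ iff $s\ne\emptyset$; $s\dashv\mathrm{NE}$ iff $s=\emptyset$; $s\models\neg\phi$ iff $s\dashv\phi$; $s\dashv\neg\phi$ iff $s\models\phi$; $s\models\phi\wedge\psi$ iff both; $s\dashv\phi\wedge\psi$ iff $s=t\cup u$, $t\dashv\phi$, $u\dashv\psi$; $s\models\phi\vee\psi$ iff $s=t\cup u$, $t\models\phi$, $u\models\psi$; $s\dashv\phi\vee\psi$ iff $s\dashv\phi$ and $s\dashv\psi$; $s\models\Diamond\phi$ iff each $w\in s$ has a nonempty $t\subseteq R[w]$ with $t\models\phi$; $s\dashv\Diamond\phi$ iff $R[w]\dashv\phi$ for all $w\in s$. $\Phi\models\psi$ iff every state supporting all of $\Phi$ supports $\psi$. An occurrence $[\psi]$ of a subformula in $\phi$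 is distributive if it is not within the scope of any $\neg$ or $\Diamond$ in $\phi$ ($\Box=\neg\Diamond\neg$); $\phi[\chi/\psi]$ replaces that occurrence by $\chi$. System $\mathcal{S}$ ($\Phi\vdash\psi$ iff some natural deduction derivation of $\psi$ has all undischarged assumptions in $\Phi$; ''$A\Leftrightarrow B$'' = both one-step rules): (a) $\wedge$I; $\wedge$E. (b) $\neg$I: from a derivation of $\bot$ from $\alpha$ infer $\neg\alpha$ discharging $\alpha$, provided its undischarged assumptions contain no $\mathrm{NE}$; from $\alpha,\neg\alpha$ infer $\beta$; $\neg\neg\phi\Leftrightarrow\phi$; $\neg(\phi\wedge\psi)\Leftrightarrow\neg\phi\vee\neg\psi$; $\neg(\phi\vee\psi)\Leftrightarrow\neg\phi\wedge\neg\psi$; $\neg\mathrm{NE}\Leftrightarrow\bot$. (c) from $\phi$ infer $\phi\vee\psi$ if $\psi$ contains no $\mathrm{NE}$; from $\phi$ infer $\phi\vee\phi$; from $\phi\vee\psi$ infer $\psi\vee\phi$; $\vee$E: from $\phi\vee\psi$ and derivations of $\chi$ from $\phi$ and from $\psi$ infer $\chi$ (discharging), provided undischarged assumptions of the subderivations contain no $\mathrm{NE}$; from $\phi\vee\psi$ and a derivation of $\chi$ from $\psi$ whose undischarged assumptions contain no $\mathrm{NE}$ infer $\phi\vee\chi$. (d) from $\bot\vee\phi$ infer $\phi$; from $\bot\!\!\!\bot\vee\phi$ infer any $\psi$. (e) if $\psi$ derivable from $\phi$ alone, from $\Diamond\phi$ infer $\Diamond\psi$; if $\psi$ derivable from $\phi_1,\dots,\phi_n$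 alone, from $\Box\phi_1,\dots,\Box\phi_n$ infer $\Box\psi$; $\neg\Diamond\phi\Leftrightarrow\Box\neg\phi$. (f) from $\Diamond(\phi\vee(\psi\wedge\mathrm{NE}))$ infer $\Diamond\psi$; from $\Diamond\phi,\Diamond\psi$ infer $\Diamond(\phi\vee\psi)$; from $\Box(\phi\wedge\mathrm{NE})$ infer $\Diamond\phi$; from $\Box\phi,\Diamond\psi$ infer $\Box(\phi\vee\psi)$. (g) for a distributive occurrence $[\psi]$ in $\phi$: from $\phi$, a derivation of $\chi$ from $\phi[\psi\wedge\mathrm{NE}/\psi]$ and a derivation of $\chi$ from $\phi[\psi\wedge\bot/\psi]$, infer $\chi$ (discharging); from $\Diamond\phi$ infer $\Diamond\phi[\psi\wedge\mathrm{NE}/\psi]\vee\Diamond\phi[\psi\wedge\bot/\psi]$; from $\Box\phi$ infer $\Box\phi[\psi\wedge\mathrm{NE}/\psi]\vee\Box\phi[\psi\wedge\bot/\psi]$. *)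

From Stdlib Require Import List.

Inductive form : Type :=
| Atom : nat -> form
| Neg : form -> form
| And : form -> form -> form
| Or : form -> form -> form
| Dia : form -> form
| NE : form.

Fixpoint classical (f : form) : Prop :=
  match f with
  | Atom _ => True
  | Neg a => classical a
  | And a b => classical a /\ classical b
  | Or a b => classical a /\ classical b
  | Dia a => classical a
  | NE => False
  end.

Definition Box (f : form) : form := Neg (Dia (Neg f)).
Definition Bot : form := And (Atom 0) (Neg (Atom 0)).
Definition BBot : form := And Bot NE.

Record model : Type := Model {
  W : Type;
  R : W -> W -> Prop;
  V : nat -> W -> Prop }.

Definition state (M : model) := W M -> Prop.

Definition is_union {M : model} (s t u : state M) : Prop :=
  forall w, s w <-> (t w \/ u w).

Fixpoint supp (M : model) (s : state M) (f : form) {struct f} : Prop :=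
  match f with
  | Atom n => forall w, s w -> V M n w
  | Neg a => anti M s a
  | And a b => supp M s a /\ supp M s b
  | Or a b => exists t u, is_union s t u /\ supp M t a /\ supp M u b
  | Dia a => forall w, s w ->
      exists t : state M, (exists x, t x) /\ (forall x, t x -> R M w x) /\ supp M t a
  | NE => exists w, s w
  end
with anti (M : model) (s : state M) (f : form) {struct f} : Prop :=
  match f with
  | Atom n => forall w, s w -> ~ V M n w
  | Neg a => supp M s a
  | And a b => exists t u, is_union s t u /\ anti M t a /\ anti M u b
  | Or a b => anti M s a /\ anti M s b
  | Dia a => forall w, s w -> anti M (R M w) a
  | NE => forall w, ~ s w
  end.

Definition fset := form -> Prop.
Definition sing (a : form) : fset := fun x => x = a.
Definition funion (G D : fset) : fset := fun x => G x \/ D x.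
Definition nefree (G : fset) : Prop := forall x, G x -> classical x.

Definition entails (Phi : fset) (psi : form) : Prop :=
  forall (M : model) (s : state M), (forall f, Phi f -> supp M s f) -> supp M s psi.

(* An occurrence not in the scope of any Neg or Dia: a context built from
   And / Or only.  phi = plug C psi, and phi[chi/psi] = plug C chi. *)
Inductive dctx : Type :=
| Hole : dctx
| CAndL : dctx -> form -> dctx
| CAndR : form -> dctx -> dctx
| COrL : dctx -> form -> dctx
| COrR : form -> dctx -> dctx.

Fixpoint plug (C : dctx) (x : form) : form :=
  match C with
  | Hole => x
  | CAndL C' b => And (plug C' x) b
  | CAndR a C' => And a (plug C' x)
  | COrL C' b => Or (plug C' x) b
  | COrR a C' => Or a (plug C' x)
  end.

(* Side conditions "undischarged assumptions contain
   no NE" are imposed on the context of the relevant subderivation (which,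
   thanks to weakening, may be taken to be exactly its set of undischarged
   assumptions). *)
Inductive Der : fset -> form -> Prop :=
| D_ass G f : G f -> Der G f
| D_weak G G' f : Der G f -> (forall x, G x -> G' x) -> Der G' f
| D_andI G a b : Der G a -> Der G b -> Der G (And a b)
| D_andE1 G a b : Der G (And a b) -> Der G a
| D_andE2 G a b : Der G (And a b) -> Der G b
| D_negI G a : classical a -> nefree G ->
    Der (funion G (sing a)) Bot -> Der G (Neg a)
| D_negE G a b : classical a -> classical b ->
    Der G a -> Der G (Neg a) -> Der G b
| D_dneI G a : Der G a -> Der G (Neg (Neg a))
| D_dneE G a : Der G (Neg (Neg a)) -> Der G a
| D_dmAnd1 G a b : Der G (Neg (And a b)) -> Der G (Or (Neg a) (Neg b))
| D_dmAnd2 G a b : Der G (Or (Neg a) (Neg b)) -> Der G (Neg (And a b))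
| D_dmOr1 G a b : Der G (Neg (Or a b)) -> Der G (And (Neg a) (Neg b))
| D_dmOr2 G a b : Der G (And (Neg a) (Neg b)) -> Der G (Neg (Or a b))
| D_negNE1 G : Der G (Neg NE) -> Der G Bot
| D_negNE2 G : Der G Bot -> Der G (Neg NE)
| D_orI G a b : classical b -> Der G a -> Der G (Or a b)
| D_orDup G a : Der G a -> Der G (Or a a)
| D_orComm G a b : Der G (Or a b) -> Der G (Or b a)
| D_orE G0 G1 G2 a b c :
    Der G0 (Or a b) ->
    Der (funion G1 (sing a)) c -> Der (funion G2 (sing b)) c ->
    nefree G1 -> nefree G2 ->
    Der (funion G0 (funion G1 G2)) c
| D_orMon G0 G1 a b c :
    Der G0 (Or a b) -> Der (funion G1 (sing b)) c -> nefree G1 ->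
    Der (funion G0 G1) (Or a c)
| D_botOr G a : Der G (Or Bot a) -> Der G a
| D_bbotOr G a b : Der G (Or BBot a) -> Der G b
| D_diaMon G a b : Der (sing a) b -> Der G (Dia a) -> Der G (Dia b)
| D_boxMon G (l : list form) b :
    Der (fun x => In x l) b ->
    (forall a, In a l -> Der G (Box a)) -> Der G (Box b)
| D_negDia1 G a : Der G (Neg (Dia a)) -> Der G (Box (Neg a))
| D_negDia2 G a : Der G (Box (Neg a)) -> Der G (Neg (Dia a))
| D_diaSep G a b : Der G (Dia (Or a (And b NE))) -> Der G (Dia b)
| D_diaJoin G a b : Der G (Dia a) -> Der G (Dia b) -> Der G (Dia (Or a b))
| D_boxNE G a : Der G (Box (And a NE)) -> Der G (Dia a)
| D_boxDia G a b : Der G (Box a) -> Der G (Dia b) -> Der G (Box (Or a b))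
| D_split G0 G1 G2 (C : dctx) p c :
    Der G0 (plug C p) ->
    Der (funion G1 (sing (plug C (And p NE)))) c ->
    Der (funion G2 (sing (plug C (And p Bot)))) c ->
    Der (funion G0 (funion G1 G2)) c
| D_diaSplit G (C : dctx) p :
    Der G (Dia (plug C p)) ->
    Der G (Or (Dia (plug C (And p NE))) (Dia (plug C (And p Bot))))
| D_boxSplit G (C : dctx) p :
    Der G (Box (plug C p)) ->
    Der G (Or (Box (plug C (And p NE))) (Box (plug C (And p Bot)))).

(* Three
   semantic facts do the work.  Support and antisupport are preserved by
   unions of states.  Classical formulas are flat: a state supports
   (antisupports) one iff each of its worlds makes it true (false).  In
   particular they are downward closed, which is what the discharging rules
   need: their subderivations are evaluated on substates, so only NE-free open
   assumptions may be carried along.  Finally, a state supporting [phi]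
   supports [phi[psi /\ NE / psi]] or [phi[psi /\ bot / psi]], according to
   whether the substate reaching the occurrence of [psi] is empty; this is the
   content of the splitting rules (g). *)

From Stdlib Require Import Classical.

Section Semantics.

Variable M : model.

Implicit Types (s t u : state M) (a b c f : form).

Lemma union_pointwise_or s (P Q : W M -> Prop) :
  (forall w, s w -> P w \/ Q w) ->
  is_union s (fun w => s w /\ P w) (fun w => s w /\ Q w).
Proof. intros HPQ w; split; [intro Hw; destruct (HPQ w Hw)|]; tauto. Qed.

Lemma is_union_sub_l s t u : is_union s t u -> forall w, t w -> s w.
Proof. intros U w Hw; apply U; auto. Qed.

Lemma is_union_sub_r s t u : is_union s t u -> forall w, u w -> s w.
Proof. intros U w Hw; apply U; auto. Qed.

Lemma is_union_interchange s t u t1 t2 u1 u2 :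
  is_union s t u -> is_union t t1 t2 -> is_union u u1 u2 ->
  is_union s (fun w => t1 w \/ u1 w) (fun w => t2 w \/ u2 w).
Proof. intros U Ut Uu w; rewrite (U w), (Ut w), (Uu w); tauto. Qed.

Lemma supp_anti_union f : forall s t u, is_union s t u ->
  (supp M t f -> supp M u f -> supp M s f) /\
  (anti M t f -> anti M u f -> anti M s f).
Proof.
  induction f as [n|a IH|a IHa b IHb|a IHa b IHb|a IH|];
    intros s t u U; simpl.
  - split; intros Ht Hu w Hw; destruct (proj1 (U w) Hw); eauto.
  - destruct (IH s t u U); split; auto.
  - split.
    + intros [Ha Hb] [Ha' Hb'].
      split; [apply (IHa s t u U) | apply (IHb s t u U)]; auto.
    + intros [t1 [t2 [Ut [Ha Hb]]]] [u1 [u2 [Uu [Ha' Hb']]]].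
      eexists _, _; split; [exact (is_union_interchange _ _ _ _ _ _ _ U Ut Uu)|].
      split; [apply (IHa _ t1 u1) | apply (IHb _ t2 u2)]; auto; intro; tauto.
  - split.
    + intros [t1 [t2 [Ut [Ha Hb]]]] [u1 [u2 [Uu [Ha' Hb']]]].
      eexists _, _; split; [exact (is_union_interchange _ _ _ _ _ _ _ U Ut Uu)|].
      split; [apply (IHa _ t1 u1) | apply (IHb _ t2 u2)]; auto; intro; tauto.
    + intros [Ha Hb] [Ha' Hb'].
      split; [apply (IHa s t u U) | apply (IHb s t u U)]; auto.
  - split; intros Ht Hu w Hw; destruct (proj1 (U w) Hw); eauto.
  - split.
    + intros [w Hw] _; exists w; apply (U w); auto.
    + intros Ht Hu w Hw; destruct (proj1 (U w) Hw); firstorder.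
Qed.

Lemma supp_union s t u f :
  is_union s t u -> supp M t f -> supp M u f -> supp M s f.
Proof. intro U; exact (proj1 (supp_anti_union f s t u U)). Qed.

Lemma supp_ext s t f : (forall w, s w <-> t w) -> supp M t f -> supp M s f.
Proof.
  intros E Ht; apply (supp_union s t t); auto.
  intro w; rewrite (E w); tauto.
Qed.

Fixpoint holds (w : W M) (f : form) : Prop :=
  match f with
  | Atom n => V M n w
  | Neg a => ~ holds w a
  | And a b => holds w a /\ holds w b
  | Or a b => holds w a \/ holds w b
  | Dia a => exists v, R M w v /\ holds v a
  | NE => True
  end.

Lemma classical_flat f : classical f -> forall s,
  (supp M s f <-> forall w, s w -> holds w f) /\
  (anti M s f <-> forall w, s w -> ~ holds w f).
Proof.
  induction f as [n|a IH|a IHa b IHb|a IHa b IHb|a IH|];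
    intros Cf s; simpl in *.
  - tauto.
  - destruct (IH Cf s) as [-> ->]; split; [tauto|].
    split; intros H w Hw; [intros Hn | apply NNPP]; eauto.
  - destruct Cf as [Ca Cb]; split.
    + rewrite (proj1 (IHa Ca s)), (proj1 (IHb Cb s)); firstorder.
    + split.
      * intros [t [u [U [Ha Hb]]]] w Hw.
        rewrite (proj2 (IHa Ca t)) in Ha; rewrite (proj2 (IHb Cb u)) in Hb.
        destruct (proj1 (U w) Hw); firstorder.
      * intros H; eexists _, _; split.
        -- apply (union_pointwise_or s (fun w => ~ holds w a) (fun w => ~ holds w b)).
           intros w Hw; specialize (H w Hw); tauto.
        -- rewrite (proj2 (IHa Ca _)), (proj2 (IHb Cb _)); tauto.
  - destruct Cf as [Ca Cb]; split.
    + split.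
      * intros [t [u [U [Ha Hb]]]] w Hw.
        rewrite (proj1 (IHa Ca t)) in Ha; rewrite (proj1 (IHb Cb u)) in Hb.
        destruct (proj1 (U w) Hw); firstorder.
      * intros H; eexists _, _; split.
        -- exact (union_pointwise_or s (fun w => holds w a) (fun w => holds w b) H).
        -- rewrite (proj1 (IHa Ca _)), (proj1 (IHb Cb _)); tauto.
    + rewrite (proj2 (IHa Ca s)), (proj2 (IHb Cb s)); firstorder.
  - split; split.
    + intros H w Hw; destruct (H w Hw) as [t [[x Hx] [HR Ht]]].
      exists x; split; auto; apply (proj1 (IH Cf t)); auto.
    + intros H w Hw; destruct (H w Hw) as [v [HR Hv]].
      exists (fun x => x = v); split; [eauto|split].
      * intros x ->; auto.
      * apply (proj1 (IH Cf _)); intros x ->; auto.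
    + intros H w Hw [v [HR Hv]].
      exact (proj1 (proj2 (IH Cf (R M w))) (H w Hw) v HR Hv).
    + intros H w Hw; apply (proj2 (IH Cf (R M w))).
      intros v HR Hv; apply (H w Hw); eauto.
  - contradiction.
Qed.

Lemma supp_classical_downward s t f : classical f ->
  (forall w, t w -> s w) -> supp M s f -> supp M t f.
Proof.
  intros Cf Hts Hs; apply (proj1 (classical_flat f Cf t)).
  intros w Hw; apply (proj1 (classical_flat f Cf s)); auto.
Qed.

Lemma supp_classical_empty s f : classical f -> (forall w, ~ s w) -> supp M s f.
Proof.
  intros Cf Hs; apply (proj1 (classical_flat f Cf s)).
  intros w Hw; destruct (Hs w Hw).
Qed.

Lemma anti_classical_of_singletons s a : classical a ->
  (forall w, s w -> ~ supp M (fun x => x = w) a) -> anti M s a.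
Proof.
  intros Ca H; apply (proj2 (classical_flat a Ca s)).
  intros w Hw Ha; apply (H w Hw), (proj1 (classical_flat a Ca _)).
  intros x ->; exact Ha.
Qed.

Lemma supp_classical_explosion s a b : classical a -> classical b ->
  supp M s a -> supp M s (Neg a) -> supp M s b.
Proof.
  intros Ca Cb Hs Ha; apply supp_classical_empty; auto; intros w Hw.
  exact (proj1 (proj2 (classical_flat a Ca s)) Ha w Hw
           (proj1 (proj1 (classical_flat a Ca s)) Hs w Hw)).
Qed.

Lemma supp_Bot s : supp M s Bot <-> forall w, ~ s w.
Proof.
  simpl; split.
  - intros [H1 H2] w Hw; exact (H2 w Hw (H1 w Hw)).
  - intros H; split; intros w Hw; destruct (H w Hw).
Qed.

Lemma supp_Box s a : supp M s (Box a) <-> forall w, s w -> supp M (R M w) a.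
Proof. reflexivity. Qed.

Lemma supp_or_classical_r s a b : classical b -> supp M s a -> supp M s (Or a b).
Proof.
  intros Cb Ha; exists s, (fun _ => False); split; [intro; tauto|].
  split; auto; apply supp_classical_empty; auto.
Qed.

Lemma supp_or_diag s a : supp M s a -> supp M s (Or a a).
Proof. intros Ha; exists s, s; split; [intro; tauto | auto]. Qed.

Lemma supp_orC s a b : supp M s (Or a b) -> supp M s (Or b a).
Proof.
  intros [t [u [U Htu]]]; exists u, t.
  split; [intro w; rewrite (U w) | ]; tauto.
Qed.

Lemma supp_or_elim s a b c : supp M s (Or a b) ->
  (forall t, (forall w, t w -> s w) -> supp M t a -> supp M t c) ->
  (forall u, (forall w, u w -> s w) -> supp M u b -> supp M u c) ->
  supp M s c.
Proof.
  intros [t [u [U [Ha Hb]]]] Hac Hbc; apply (supp_union s t u); auto.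
  - apply Hac; auto; exact (is_union_sub_l _ _ _ U).
  - apply Hbc; auto; exact (is_union_sub_r _ _ _ U).
Qed.

Lemma supp_or_mono_r s a b c : supp M s (Or a b) ->
  (forall u, (forall w, u w -> s w) -> supp M u b -> supp M u c) ->
  supp M s (Or a c).
Proof.
  intros [t [u [U [Ha Hb]]]] Hbc; exists t, u; split; [|split]; auto.
  apply Hbc; auto; exact (is_union_sub_r _ _ _ U).
Qed.

Lemma supp_or_Bot_l s a : supp M s (Or Bot a) -> supp M s a.
Proof.
  intros [t [u [U [Ht Hu]]]]; apply (supp_ext s u); auto.
  intro w; rewrite (U w); pose proof (proj1 (supp_Bot t) Ht w); tauto.
Qed.

Lemma not_supp_or_BBot_l s a : ~ supp M s (Or BBot a).
Proof.
  intros [t [u [_ [[Ht [w Hw]] _]]]]; exact (proj1 (supp_Bot t) Ht w Hw).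
Qed.

Lemma supp_dia_mono s a b :
  (forall t, supp M t a -> supp M t b) -> supp M s (Dia a) -> supp M s (Dia b).
Proof.
  intros Hab Ha w Hw; destruct (Ha w Hw) as [t [Hne [HR Ht]]]; eauto.
Qed.

Lemma supp_box_mono s (P : form -> Prop) b :
  (forall t, (forall a, P a -> supp M t a) -> supp M t b) ->
  (forall a, P a -> supp M s (Box a)) -> supp M s (Box b).
Proof.
  intros Hb HP; apply supp_Box; intros w Hw; apply Hb.
  intros a Ha; exact (proj1 (supp_Box s a) (HP a Ha) w Hw).
Qed.

Lemma supp_dia_of_dia_or_NE s a b :
  supp M s (Dia (Or a (And b NE))) -> supp M s (Dia b).
Proof.
  intros H w Hw; destruct (H w Hw) as [t [_ [HR [t1 [t2 [U [_ [Hb Hne]]]]]]]].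
  exists t2; repeat split; auto.
  intros x Hx; apply HR, (is_union_sub_r _ _ _ U x Hx).
Qed.

Lemma supp_dia_or s a b :
  supp M s (Dia a) -> supp M s (Dia b) -> supp M s (Dia (Or a b)).
Proof.
  intros Ha Hb w Hw.
  destruct (Ha w Hw) as [t1 [[x Hx] [HR1 H1]]], (Hb w Hw) as [t2 [_ [HR2 H2]]].
  exists (fun x => t1 x \/ t2 x); split; [eauto|split].
  - intros y [Hy|Hy]; auto.
  - exists t1, t2; split; [intro; tauto | auto].
Qed.

Lemma supp_dia_of_box_NE s a : supp M s (Box (And a NE)) -> supp M s (Dia a).
Proof.
  intros H w Hw; destruct (proj1 (supp_Box s _) H w Hw); exists (R M w); auto.
Qed.

Lemma supp_box_or_dia s a b :
  supp M s (Box a) -> supp M s (Dia b) -> supp M s (Box (Or a b)).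
Proof.
  intros Ha Hb; apply supp_Box; intros w Hw.
  destruct (Hb w Hw) as [t [_ [HR Ht]]].
  exists (R M w), t; split; [intro x; split; [tauto | intros [?|?]; auto] | ].
  split; auto; exact (proj1 (supp_Box s a) Ha w Hw).
Qed.

Lemma supp_plug_split (C : dctx) p : forall s, supp M s (plug C p) ->
  supp M s (plug C (And p NE)) \/ supp M s (plug C (And p Bot)).
Proof.
  induction C as [|C IH b|b C IH|C IH b|b C IH]; intros s H; simpl in *.
  - destruct (classic (exists w, s w)) as [Hne|Hne]; [left | right]; split; auto.
    apply supp_Bot; intros w Hw; apply Hne; eauto.
  - destruct H as [H1 H2]; destruct (IH s H1); auto.
  - destruct H as [H1 H2]; destruct (IH s H2); auto.
  - destruct H as [t [u [U [H1 H2]]]]; destruct (IH t H1); [left|right]; exists t, u; auto.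
  - destruct H as [t [u [U [H1 H2]]]]; destruct (IH u H2); [left|right]; exists t, u; auto.
Qed.

Lemma supp_or_of_pointwise s f g (P Q : W M -> Prop) :
  (forall t, supp M t f <-> forall w, t w -> P w) ->
  (forall t, supp M t g <-> forall w, t w -> Q w) ->
  (forall w, s w -> P w \/ Q w) -> supp M s (Or f g).
Proof.
  intros Hf Hg HPQ; eexists _, _; split; [exact (union_pointwise_or s P Q HPQ)|].
  rewrite Hf, Hg; tauto.
Qed.

Lemma supp_dia_plug_split s (C : dctx) p : supp M s (Dia (plug C p)) ->
  supp M s (Or (Dia (plug C (And p NE))) (Dia (plug C (And p Bot)))).
Proof.
  intros H; eapply supp_or_of_pointwise; [intro; apply iff_refl | intro; apply iff_refl |].
  intros w Hw; destruct (H w Hw) as [t [Hne [HR Ht]]].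
  destruct (supp_plug_split C p t Ht); [left | right]; eauto.
Qed.

Lemma supp_box_plug_split s (C : dctx) p : supp M s (Box (plug C p)) ->
  supp M s (Or (Box (plug C (And p NE))) (Box (plug C (And p Bot)))).
Proof.
  intros H; eapply supp_or_of_pointwise; [intro; apply supp_Box | intro; apply supp_Box |].
  intros w Hw; exact (supp_plug_split C p _ (proj1 (supp_Box s _) H w Hw)).
Qed.

Definition supp_set s (G : fset) : Prop := forall f, G f -> supp M s f.

Lemma supp_set_funion s G D :
  supp_set s (funion G D) <-> supp_set s G /\ supp_set s D.
Proof. unfold supp_set, funion; firstorder. Qed.

Lemma supp_set_sing s a : supp_set s (sing a) <-> supp M s a.
Proof. unfold supp_set, sing; split; [auto | intros Ha f ->; exact Ha]. Qed.

Lemma supp_set_nefree_downward s t G : nefree G ->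
  (forall w, t w -> s w) -> supp_set s G -> supp_set t G.
Proof. intros HG Hts Hs f Hf; apply (supp_classical_downward s); auto. Qed.

Definition entails_in (G : fset) f : Prop := forall s, supp_set s G -> supp M s f.

Lemma entails_in_assumption G f : G f -> entails_in G f.
Proof. intros Hf s Hs; exact (Hs f Hf). Qed.

Lemma entails_in_weaken G G' f :
  entails_in G f -> (forall x, G x -> G' x) -> entails_in G' f.
Proof. intros H HG s Hs; apply H; intros g Hg; apply Hs, HG, Hg. Qed.

Lemma entails_in_negI G a : classical a -> nefree G ->
  entails_in (funion G (sing a)) Bot -> entails_in G (Neg a).
Proof.
  intros Ca HG H s Hs; apply anti_classical_of_singletons; auto; intros w Hw Ha.
  refine (proj1 (supp_Bot (fun x => x = w)) (H _ _) w eq_refl).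
  apply supp_set_funion; split; [| apply supp_set_sing; exact Ha].
  apply (supp_set_nefree_downward s); auto; intros x ->; exact Hw.
Qed.

Lemma entails_in_or_elim G0 G1 G2 a b c :
  entails_in G0 (Or a b) ->
  entails_in (funion G1 (sing a)) c -> entails_in (funion G2 (sing b)) c ->
  nefree G1 -> nefree G2 -> entails_in (funion G0 (funion G1 G2)) c.
Proof.
  intros Hab Hac Hbc N1 N2 s Hs.
  apply supp_set_funion in Hs as [H0 H12]; apply supp_set_funion in H12 as [H1 H2].
  apply (supp_or_elim s a b c (Hab s H0)); intros t Hts Ht;
    [apply Hac | apply Hbc]; apply supp_set_funion;
    split; try (apply supp_set_sing; exact Ht);
    eapply supp_set_nefree_downward; eauto.
Qed.

Lemma entails_in_or_mono_r G0 G1 a b c :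
  entails_in G0 (Or a b) -> entails_in (funion G1 (sing b)) c -> nefree G1 ->
  entails_in (funion G0 G1) (Or a c).
Proof.
  intros Hab Hbc N1 s Hs; apply supp_set_funion in Hs as [H0 H1].
  apply (supp_or_mono_r s a b c (Hab s H0)); intros u Hus Hu; apply Hbc.
  apply supp_set_funion; split; [eapply supp_set_nefree_downward; eauto |].
  apply supp_set_sing; exact Hu.
Qed.

Lemma entails_in_plug_split G0 G1 G2 (C : dctx) p c :
  entails_in G0 (plug C p) ->
  entails_in (funion G1 (sing (plug C (And p NE)))) c ->
  entails_in (funion G2 (sing (plug C (And p Bot)))) c ->
  entails_in (funion G0 (funion G1 G2)) c.
Proof.
  intros Hp HNE HBot s Hs.
  apply supp_set_funion in Hs as [H0 H12]; apply supp_set_funion in H12 as [H1 H2].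
  destruct (supp_plug_split C p s (Hp s H0)) as [Hs | Hs];
    [apply HNE | apply HBot]; apply supp_set_funion; split; auto;
    apply supp_set_sing; exact Hs.
Qed.

End Semantics.

Theorem theorem4p34 (Phi : fset) (psi : form) :
  Der Phi psi -> entails Phi psi.
Proof.
  intros D M; change (entails_in M Phi psi); induction D;
    try solve [eauto using entails_in_assumption, entails_in_weaken,
                 entails_in_negI, entails_in_or_elim, entails_in_or_mono_r,
                 entails_in_plug_split];
    intros s HG;
    (* The double negation, De Morgan, [neg NE] and [neg Dia] rules are
       identities of the bilateral semantics. *)
    try solve [exact (IHD s HG)
               | exact (proj1 (supp_Bot M s) (IHD s HG))
               | exact (proj2 (supp_Bot M s) (IHD s HG))].
  - split; auto.
  - exact (proj1 (IHD s HG)).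
  - exact (proj2 (IHD s HG)).
  - exact (supp_classical_explosion M s a b H H0 (IHD1 s HG) (IHD2 s HG)).
  - apply supp_or_classical_r; auto.
  - apply supp_or_diag; auto.
  - apply supp_orC; auto.
  - exact (supp_or_Bot_l M s a (IHD s HG)).
  - destruct (not_supp_or_BBot_l M s a (IHD s HG)).
  - apply (supp_dia_mono M s a); auto.
    intros t Ht; apply IHD1, supp_set_sing, Ht.
  - apply (supp_box_mono M s _ b IHD); intros a Ha; exact (H0 a Ha s HG).
  - exact (supp_dia_of_dia_or_NE M s a b (IHD s HG)).
  - exact (supp_dia_or M s a b (IHD1 s HG) (IHD2 s HG)).
  - exact (supp_dia_of_box_NE M s a (IHD s HG)).
  - exact (supp_box_or_dia M s a b (IHD1 s HG) (IHD2 s HG)).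
  - exact (supp_dia_plug_split M s C p (IHD s HG)).
  - exact (supp_box_plug_split M s C p (IHD s HG)).
Qed.
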